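(* Let $G=(V,E)$ be an undirected graph and $f:V\to\mathbb{Z}\cup\{-\infty\}$, $g:V\to\mathbb{Z}\cup\{+\infty\}$ with $f\le g$. An $(f,g)$-bounded orientation $D$ of $G$ is decreasingly minimal among the $(f,g)$-bounded orientations of $G$ if and only if there is no directed path in $D$ from a node $s$ to a node $t$ for which $\varrho_D(t)\ge\varrho_D(s)+2$, $\varrho_D(s)<g(s)$ and $\varrho_D(t)>f(t)$.
   Context: An orientation $D$ is $(f,g)$-bounded if $f(v)\le\varrho_D(v)\le g(v)$ for every $v\in V$, where $\varrho_D(v)$ is the number of arcs with head $v$. It is decreasingly minimal among a class of orientations if its in-degree vector $(\varrho_D(v))_v$ has largest component as small as possible within the class, within this second largest as small as possible, and so on. *)

From mathcomp Require Import all_boot all_order all_algebra.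
Set Implicit Arguments. Unset Strict Implicit. Unset Printing Implicit Defensive.
Import Order.TTheory GRing.Theory Num.Theory.

(* An undirected (multi)graph G = (V, E): edge e has endpoints ends e.
   An orientation D : {ffun E -> bool}; D e = true orients e from
   (ends e).1 to (ends e).2, D e = false the other way. *)
Section Orient.
Variables (V E : finType) (ends : E -> V * V).

Definition otail (D : {ffun E -> bool}) (e : E) : V :=
  if D e then (ends e).1 else (ends e).2.
Definition ohead (D : {ffun E -> bool}) (e : E) : V :=
  if D e then (ends e).2 else (ends e).1.

Definition indeg (D : {ffun E -> bool}) (v : V) : nat :=
  #|[set e | ohead D e == v]|.

Definition arcrel (D : {ffun E -> bool}) : rel V :=
  fun u w => [exists e, (otail D e == u) && (ohead D e == w)].
Definition dipath (D : {ffun E -> bool}) (s t : V) : bool := connect (arcrel D) s t.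

(* Bounds: f : V -> option int with None = -oo, g : V -> option int with None = +oo. *)
Definition ge_lo (f : option int) (x : int) : bool :=
  if f is Some a then (a <= x)%R else true.
Definition le_hi (g : option int) (x : int) : bool :=
  if g is Some b then (x <= b)%R else true.
Definition lt_hi (g : option int) (x : int) : bool :=
  if g is Some b then (x < b)%R else true.
Definition gt_lo (f : option int) (x : int) : bool :=
  if f is Some a then (a < x)%R else true.
Definition bounds_ok (f g : V -> option int) : Prop :=
  forall v, match f v, g v with Some a, Some b => (a <= b)%R | _, _ => true end : bool.

Definition fg_bounded (f g : V -> option int) (D : {ffun E -> bool}) : Prop :=
  forall v, ge_lo (f v) (indeg D v)%:Z && le_hi (g v) (indeg D v)%:Z.

Definition dec_vec (D : {ffun E -> bool}) : seq nat :=
  sort geq [seq indeg D v | v <- enum V].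

(* strict lexicographic order on sequences (used on equal-length sequences) *)
Definition lexlt (s t : seq nat) : Prop :=
  exists i, take i s = take i t /\ nth 0 s i < nth 0 t i.

Definition decmin (f g : V -> option int) (D : {ffun E -> bool}) : Prop :=
  fg_bounded f g D /\
  forall D' : {ffun E -> bool}, fg_bounded f g D' -> ~ lexlt (dec_vec D') (dec_vec D).
End Orient.

From Pilot Require Import Defs.
From mathcomp Require Import all_boot all_order all_algebra zify.
Set Implicit Arguments. Unset Strict Implicit. Unset Printing Implicit Defensive.

(* Since a decreasingly sorted vector with fewer than N entries is compared
   lexicographically exactly as its base-N potential sum_i N ^ x_i, decreasing
   minimality means minimising sum_v N ^ rho_D(v) with N = |V| + 1.  Reversing a
   simple directed path from s to t moves one unit of in-degree from t to s; along
   an improving path this strictly lowers the potential.  Conversely, let D have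
   no improving path and D' be (f,g)-bounded with rho_D'(t) < rho_D(t) for some t.
   Counting in-degrees on the set reached from t in D' through the edges on which
   D and D' disagree yields such an s with rho_D(s) < rho_D'(s).  Reversing that
   path in D' keeps it (f,g)-bounded, does not raise its potential (D has no
   improving s-t path) and brings it closer to D, so induction on the number of
   disagreeing edges gives potential(D) <= potential(D'). *)

Definition potential (N : nat) (s : seq nat) : nat := \sum_(x <- s) N ^ x.

Lemma potential_cons N x s : potential N (x :: s) = N ^ x + potential N s.
Proof. by rewrite /potential big_cons. Qed.

Lemma potential_le N x s :
  0 < N -> all (leq^~ x) s -> potential N s <= size s * N ^ x.
Proof.
move=> N_gt0; elim: s => [|y s IH] /=; first by rewrite /potential big_nil.
by case/andP=> le_yx /IH le_s; rewrite potential_cons mulSn leq_add ?leq_pexp2l.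
Qed.

Lemma potential_sorted_lt N x s :
  sorted geq (x :: s) -> size (x :: s) < N -> potential N (x :: s) < N ^ x.+1.
Proof.
move=> /(order_path_min (rev_trans leq_trans)) all_s /= lt_sN.
have N_gt0 : 0 < N by lia.
have := potential_le N_gt0 all_s; rewrite potential_cons expnS.
have : (size s).+2 * N ^ x <= N * N ^ x by rewrite leq_mul2r; lia.
lia.
Qed.

Lemma lexlt_nil : ~ lexlt [::] [::].
Proof. by case=> [[|i]] []. Qed.

Lemma lexlt_cons y t x s : lexlt (y :: t) (x :: s) <-> y < x \/ y = x /\ lexlt t s.
Proof.
split=> [[[|i] /= [eq_take lt_nth]]|[lt_yx|[-> [i [eq_take lt_nth]]]]].
- by left.
- by case: eq_take => -> eq_take; right; split; last exists i.
- by exists 0.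
- by exists i.+1; rewrite /= eq_take.
Qed.

Lemma lexlt_potential N s t :
    size s = size t -> size s < N -> sorted geq s -> sorted geq t ->
  lexlt t s <-> potential N t < potential N s.
Proof.
elim: s t => [|x s IH] [|y t] //=.
  by split=> [/lexlt_nil|]; rewrite /potential big_nil.
move=> [eq_size] lt_sN sorted_s sorted_t.
have N_gt0 : 0 < N by lia.
have ub_s := potential_sorted_lt sorted_s lt_sN.
have ub_t : potential N (y :: t) < N ^ y.+1.
  by apply: potential_sorted_lt; rewrite //= -eq_size.
have lb_s := leq_addr (potential N s) (N ^ x).
have lb_t := leq_addr (potential N t) (N ^ y).
rewrite lexlt_cons !potential_cons in ub_s ub_t *.
case: (ltngtP y x) => [lt_yx|lt_xy|->].
- have : N ^ y.+1 <= N ^ x by rewrite leq_pexp2l.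
  by split=> [_|]; [lia | left].
- have : N ^ x.+1 <= N ^ y by rewrite leq_pexp2l.
  by split=> [[|[]]|]; lia.
- rewrite ltn_add2l -IH ?(path_sorted sorted_s) ?(path_sorted sorted_t) //; last lia.
  by split=> [[|[]]|]; [lia | | right].
Qed.

Definition unit_shift (T : eqType) (x y : T -> nat) (a b : T) : Prop :=
  [/\ y a + 1 = x a, y b = x b + 1 & forall v, v != a -> v != b -> y v = x v].

Lemma unit_shift_neq (T : eqType) (x y : T -> nat) a b : unit_shift x y a b -> a != b.
Proof. by case=> ya yb _; apply/eqP=> eq_ab; rewrite eq_ab in ya; lia. Qed.

Lemma unit_shift_trans (T : eqType) (x y z : T -> nat) a b c :
  unit_shift x y b c -> unit_shift y z a b -> a != c -> unit_shift x z a c.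
Proof.
move=> xy yz neq_ac; have neq_bc := unit_shift_neq xy; have neq_ab := unit_shift_neq yz.
case: xy yz => [xy_b xy_c xy_o] [yz_a yz_b yz_o]; split.
- by rewrite -xy_o // eq_sym.
- by rewrite yz_o 1?eq_sym.
- move=> v v_a v_c; case: (eqVneq v b) => [->|v_b]; first lia.
  by rewrite yz_o ?xy_o.
Qed.

Lemma unit_shift_sum_expn (T : finType) N (x y : T -> nat) a b :
    unit_shift x y a b ->
  \sum_v N ^ y v + (N ^ x a + N ^ x b) = \sum_v N ^ x v + (N ^ y a + N ^ y b).
Proof.
move=> xy; have neq_ab := unit_shift_neq xy; case: xy => _ _ xy_o.
have split_ab F : \sum_v F v = F a + (F b + \sum_(v | (v != a) && (v != b)) F v).
  by rewrite (bigD1 a) //= (bigD1 b) 1?eq_sym // big_mkcondr.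
rewrite !split_ab; under eq_bigr => v /andP [v_a v_b] do rewrite xy_o //.
lia.
Qed.

Lemma expn_exchange N p q : 1 < N -> q < p -> N ^ q.+1 + N ^ p < N ^ p.+1 + N ^ q.
Proof.
move=> N_gt1 lt_qp.
have : N ^ q.+1 <= N ^ p by rewrite leq_pexp2l; lia.
have : 2 * N ^ p <= N ^ p.+1 by rewrite expnS leq_mul2r N_gt1 orbT.
have : 0 < N ^ q by rewrite expn_gt0; lia.
lia.
Qed.

Lemma unit_shift_sum_expn_lt (T : finType) N (x y : T -> nat) a b :
    1 < N -> unit_shift x y a b -> x b + 2 <= x a ->
  \sum_v N ^ y v < \sum_v N ^ x v.
Proof.
move=> N_gt1 xy lt_ba; have := unit_shift_sum_expn N xy.
have [ya yb _] := xy; have := @expn_exchange N (y a) (x b) N_gt1 ltac:(lia).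
rewrite -[(x b).+1]addn1 -[(y a).+1]addn1 -yb ya; lia.
Qed.

Lemma unit_shift_sum_expn_le (T : finType) N (x y : T -> nat) a b :
    1 < N -> unit_shift x y a b -> x b + 1 <= x a ->
  \sum_v N ^ y v <= \sum_v N ^ x v.
Proof.
move=> N_gt1 xy le_ba; have [lt_ba|lt_ab] := leqP (x b + 2) (x a).
  exact/ltnW/(unit_shift_sum_expn_lt N_gt1 xy).
have [ya yb _] := xy; have := unit_shift_sum_expn N xy.
have -> : y a = x b by lia.
have -> : y b = x a by lia.
lia.
Qed.

Lemma ge_lo_le fv m n : ge_lo fv m%:Z -> m <= n -> ge_lo fv n%:Z.
Proof. by case: fv => //= a; lia. Qed.

Lemma le_hi_ge gv m n : le_hi gv m%:Z -> n <= m -> le_hi gv n%:Z.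
Proof. by case: gv => //= b; lia. Qed.

Lemma gt_loS fv n : gt_lo fv n.+1%:Z = ge_lo fv n%:Z.
Proof. by case: fv => //= a; lia. Qed.

Lemma lt_hiS gv n : lt_hi gv n%:Z = le_hi gv n.+1%:Z.
Proof. by case: gv => //= b; lia. Qed.

Section Orientations.
Variables (V E : finType) (ends : E -> V * V).
Local Notation indeg := (indeg ends).
Local Notation otail := (otail ends).
Local Notation ohead := (Defs.ohead ends).

Definition reverse_arc (D : {ffun E -> bool}) (e0 : E) : {ffun E -> bool} :=
  [ffun e => if e == e0 then ~~ D e else D e].

Definition arcrel_on (D : {ffun E -> bool}) (P : pred E) : rel V :=
  fun u w => [exists e, [&& P e, otail D e == u & ohead D e == w]].

Lemma indeg_sum D v : indeg D v = \sum_e (ohead D e == v).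
Proof. by rewrite /indeg -sum1_card big_mkcond; apply: eq_bigr => e _; rewrite inE. Qed.

Lemma unit_shift_reverse_arc D e0 :
  otail D e0 != ohead D e0 ->
  unit_shift (indeg D) (indeg (reverse_arc D e0)) (ohead D e0) (otail D e0).
Proof.
move=> neq_e0.
have flip_e0 v :
  indeg (reverse_arc D e0) v + (ohead D e0 == v) = indeg D v + (otail D e0 == v).
  rewrite !indeg_sum (bigD1 e0) //= [in RHS](bigD1 e0) //=.
  have -> : ohead (reverse_arc D e0) e0 = otail D e0.
    by rewrite /Defs.ohead /otail ffunE eqxx; case: (D e0).
  under eq_bigr => e ne_e0 do rewrite /Defs.ohead ffunE (negbTE ne_e0) -/(ohead D e).
  lia.
split=> [||v v_head v_tail].
- by have := flip_e0 (ohead D e0); rewrite eqxx (negbTE neq_e0); lia.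
- by have := flip_e0 (otail D e0); rewrite eqxx eq_sym (negbTE neq_e0); lia.
- by have := flip_e0 v; rewrite !(eq_sym _ v) (negbTE v_head) (negbTE v_tail); lia.
Qed.

Lemma reverse_path P D s p :
    uniq (s :: p) -> path (arcrel_on D P) s p -> p != [::] ->
  exists2 D2, unit_shift (indeg D) (indeg D2) (last s p) s
            & forall e, D2 e != D e -> P e.
Proof.
elim: p s D => [//|x p IH] s D /= /andP [s_notin uniq_xp] /andP [arc_sx path_xp] _.
have [e0 /and3P [P_e0 /eqP tail_e0 /eqP head_e0]] := existsP arc_sx.
have neq_sx : s != x by apply: contraNneq s_notin => ->; rewrite inE eqxx.
have shift_e0 : unit_shift (indeg D) (indeg (reverse_arc D e0)) x s.
  by rewrite -tail_e0 -head_e0; apply: unit_shift_reverse_arc; rewrite tail_e0 head_e0.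
have P_flip e : reverse_arc D e0 e != D e -> P e.
  by rewrite ffunE; case: (eqVneq e e0) => [->|_]; rewrite ?eqxx.
case: p IH uniq_xp path_xp s_notin => [|y p] IH uniq_xp path_xp s_notin.
  by exists (reverse_arc D e0).
have path_flip : path (arcrel_on (reverse_arc D e0) P) x (y :: p).
  apply: (sub_in_path (P := predC1 s)) path_xp; last first.
    by apply/allP => z z_in /=; apply: contraNneq s_notin => <-.
  move=> a b /[!inE] a_s _ /existsP [e /and3P [P_e tail_e head_e]].
  have ne_e0 : e != e0.
    by apply: contraNneq a_s => eq_e; rewrite -(eqP tail_e) eq_e tail_e0.
  apply/existsP; exists e.
  have [-> ->] : otail (reverse_arc D e0) e = otail D e /\ ohead (reverse_arc D e0) e = ohead D e.
    by rewrite /Defs.otail /Defs.ohead ffunE (negbTE ne_e0).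
  by rewrite P_e tail_e head_e.
have [D2 shift_D2 P_D2] := IH _ _ uniq_xp path_flip isT.
exists D2 => [|e].
  apply: unit_shift_trans shift_e0 shift_D2 _.
  by apply: contraNneq s_notin => <-; apply: mem_last.
by case: (eqVneq (D2 e) (reverse_arc D e0 e)) => [->|/P_D2]; [apply: P_flip|].
Qed.

Lemma reverse_connect P D s t :
    connect (arcrel_on D P) s t -> s != t ->
  exists2 D2, unit_shift (indeg D) (indeg D2) t s & forall e, D2 e != D e -> P e.
Proof.
move=> /connectP [p path_p ->]; case: (shortenP path_p) => q path_q uniq_q _ neq_s.
by apply: reverse_path => //; apply: contraNneq neq_s => ->.
Qed.

Lemma sum_indeg_closed (D D' : {ffun E -> bool}) (X : {set V}) :
    (forall e, D e != D' e -> otail D' e \in X -> ohead D' e \in X) ->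
  \sum_(v in X) indeg D v <= \sum_(v in X) indeg D' v.
Proof.
move=> closed_X; have sum_indeg D0 : \sum_(v in X) indeg D0 v = \sum_e (ohead D0 e \in X).
  under eq_bigr do rewrite indeg_sum.
  rewrite exchange_big; apply: eq_bigr => e _; rewrite big_mkcond (bigD1 (ohead D0 e)) //=.
  rewrite eqxx big1 => [|v ne_v]; first by case: (_ \in X).
  by rewrite eq_sym (negbTE ne_v) if_same.
rewrite !sum_indeg; apply: leq_sum => e _; case: (eqVneq (D e) (D' e)) => [eq_e|ne_e].
  by rewrite /Defs.ohead eq_e.
have -> : ohead D e = otail D' e.
  by rewrite /Defs.ohead /otail; move: ne_e; case: (D e); case: (D' e).
by case: (boolP (otail D' e \in X)) => // /(closed_X e ne_e) ->.
Qed.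

Lemma exists_deficit_path (D D' : {ffun E -> bool}) t :
    indeg D' t < indeg D t ->
  exists2 s, indeg D s < indeg D' s
           & connect (arcrel_on D' [pred e | D e != D' e]) t s.
Proof.
move=> lt_t; set R := [set v | connect (arcrel_on D' [pred e | D e != D' e]) t v].
have t_R : t \in R by rewrite inE connect0.
have [/existsP [s /andP [s_R lt_s]]|] := boolP [exists s in R, indeg D s < indeg D' s].
  by exists s; rewrite // inE in s_R.
rewrite negb_exists => /forallP /= le_R.
have le_sum : \sum_(v in R) indeg D v <= \sum_(v in R) indeg D' v.
  apply: sum_indeg_closed => e ne_e; rewrite !inE => reach_tail.
  apply: connect_trans reach_tail (connect1 _).
  by apply/existsP; exists e; rewrite /= ne_e !eqxx.
have le_rest : \sum_(v in R | v != t) indeg D' v <= \sum_(v in R | v != t) indeg D v.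
  by apply: leq_sum => v /andP [v_R _]; have := le_R v; rewrite v_R -leqNgt.
move: le_sum; rewrite (bigD1 t) //= [leqRHS](bigD1 t) //=; lia.
Qed.

Lemma diff_connect_dipath (D D' : {ffun E -> bool}) s t :
  connect (arcrel_on D' [pred e | D e != D' e]) t s -> dipath ends D s t.
Proof.
move=> reach; rewrite /dipath; have /= <- := connect_rev (arcrel ends D) t s; move: reach.
apply: connect_sub => u w /existsP [e /and3P [ne_e tail_e head_e]].
apply/connect1/existsP; exists e; move: ne_e tail_e head_e.
by rewrite /Defs.otail /Defs.ohead /=; case: (D e); case: (D' e) => //= _ -> ->.
Qed.

Lemma fg_bounded_unit_shift f g (D D2 : {ffun E -> bool}) a b :
    fg_bounded ends f g D -> unit_shift (indeg D) (indeg D2) a b ->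
    ge_lo (f a) (indeg D2 a)%:Z -> le_hi (g b) (indeg D2 b)%:Z ->
  fg_bounded ends f g D2.
Proof.
move=> bD [D2a D2b D2o] lo_a hi_b v.
case: (eqVneq v a) => [->|v_a].
  by rewrite lo_a /=; case/andP: (bD a) => _ /le_hi_ge; apply; lia.
case: (eqVneq v b) => [->|v_b].
  by rewrite hi_b andbT; case/andP: (bD b) => /ge_lo_le lo_b _; apply: lo_b; lia.
by rewrite D2o //; apply: bD.
Qed.

Definition orient_dist (D D' : {ffun E -> bool}) : nat := #|[set e | D e != D' e]|.

Lemma orient_dist_lt (D D' D2 : {ffun E -> bool}) :
    (forall e, D2 e != D' e -> D e != D' e) -> D2 != D' ->
  orient_dist D D2 < orient_dist D D'.
Proof.
move=> sub_diff ne_D2; have /existsP [e0 ne_e0] : [exists e, D2 e != D' e].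
  apply: contraLR ne_D2 => /existsPn eq_D2; apply/negPn/eqP/ffunP => e.
  by apply/eqP; rewrite -[_ == _]negbK eq_D2.
apply/proper_card/properP; split.
  apply/subsetP => e; rewrite !inE; case: (eqVneq (D2 e) (D' e)) => [<-//|/sub_diff //].
exists e0; rewrite !inE; first exact: sub_diff.
by move: ne_e0 (sub_diff _ ne_e0); case: (D e0); case: (D2 e0); case: (D' e0).
Qed.

Definition indeg_potential (D : {ffun E -> bool}) : nat := \sum_v #|V|.+1 ^ indeg D v.

Lemma lexlt_dec_vec (D D' : {ffun E -> bool}) :
  lexlt (dec_vec ends D') (dec_vec ends D) <-> indeg_potential D' < indeg_potential D.
Proof.
have potentialE D0 : potential #|V|.+1 (dec_vec ends D0) = indeg_potential D0.
  by rewrite /potential /dec_vec (perm_big _ (permEl (perm_sort _ _))) big_map big_enum.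
have size_dec D0 : size (dec_vec ends D0) = #|V| by rewrite size_sort size_map -cardE.
have sorted_dec D0 : sorted geq (dec_vec ends D0).
  by apply: sort_sorted => m n; apply: leq_total.
by rewrite -!potentialE; apply: lexlt_potential; rewrite ?size_dec.
Qed.

Definition improving_path f g (D : {ffun E -> bool}) (s t : V) : Prop :=
  [/\ dipath ends D s t, indeg D s + 2 <= indeg D t,
      lt_hi (g s) (indeg D s)%:Z & gt_lo (f t) (indeg D t)%:Z].

Lemma improving_path_potential f g (D : {ffun E -> bool}) s t :
    fg_bounded ends f g D -> improving_path f g D s t ->
  exists2 D2, fg_bounded ends f g D2 & indeg_potential D2 < indeg_potential D.
Proof.
move=> bD [reach lt_st hi_s lo_t].
have neq_st : s != t by apply: contraTneq lt_st => ->; lia.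
have reach_on : connect (arcrel_on D predT) s t.
  by rewrite (eq_connect (e' := arcrel ends D)) // => u w; apply: eq_existsb.
have [D2 shift _] := reverse_connect reach_on neq_st.
have [D2t D2s _] := shift.
exists D2.
  apply: fg_bounded_unit_shift bD shift _ _.
    by rewrite -gt_loS -addn1 D2t.
  by rewrite D2s addn1 -lt_hiS.
by apply: unit_shift_sum_expn_lt shift lt_st; apply/card_gt0P; exists s.
Qed.

Lemma closer_orientation f g (D D' : {ffun E -> bool}) t :
    fg_bounded ends f g D -> (forall s t, ~ improving_path f g D s t) ->
    fg_bounded ends f g D' -> indeg D' t < indeg D t ->
  exists2 D2, fg_bounded ends f g D2 &
    indeg_potential D2 <= indeg_potential D' /\ orient_dist D D2 < orient_dist D D'.
Proof.
move=> bD no_path bD' lt_t; have [s lt_s reach] := exists_deficit_path lt_t.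
have neq_ts : t != s by apply: contraTneq lt_t => ->; lia.
have [D2 shift flips] := reverse_connect reach neq_ts.
have [D2s D2t _] := shift.
have le_ts : indeg D t <= indeg D s + 1.
  rewrite leqNgt; apply/negP => lt_ts; apply: (no_path s t); split.
  - exact: diff_connect_dipath reach.
  - lia.
  - by rewrite lt_hiS; case/andP: (bD' s) => _ /le_hi_ge; apply.
  - rewrite -(ltn_predK lt_t) gt_loS.
    by case/andP: (bD' t) => /ge_lo_le lo_t _; apply: lo_t; lia.
exists D2; last split.
- apply: fg_bounded_unit_shift bD' shift _ _.
    by case/andP: (bD s) => /ge_lo_le lo_s _; apply: lo_s; lia.
  by case/andP: (bD t) => _ /le_hi_ge; apply; lia.
- by apply: unit_shift_sum_expn_le shift _; [apply/card_gt0P; exists s | lia].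
- apply: orient_dist_lt => [e /flips //|]; apply/eqP => eq_D2.
  by rewrite eq_D2 in D2s; lia.
Qed.

Lemma no_improving_path_potential_min f g (D : {ffun E -> bool}) :
    fg_bounded ends f g D -> (forall s t, ~ improving_path f g D s t) ->
  forall D', fg_bounded ends f g D' -> indeg_potential D <= indeg_potential D'.
Proof.
move=> bD no_path D'; have [n] := ubnP (orient_dist D D').
elim: n D' => // n IH D' lt_dist bD'.
have [le_all|] := boolP [forall v, indeg D v <= indeg D' v].
  by apply: leq_sum => v _; rewrite leq_pexp2l // (forallP le_all).
rewrite negb_forall => /existsP [t]; rewrite -ltnNge => lt_t.
have [D2 bD2 [le_pot lt_D2]] := closer_orientation bD no_path bD' lt_t.
by apply: leq_trans (IH D2 _ bD2) le_pot; lia.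
Qed.

End Orientations.

Theorem theorem5p1 (V E : finType) (ends : E -> V * V)
    (f g : V -> option int) (hfg : bounds_ok f g)
    (D : {ffun E -> bool}) (hD : fg_bounded ends f g D) :
  decmin ends f g D <->
  ~ (exists s t : V,
       [/\ dipath ends D s t,
           indeg ends D s + 2 <= indeg ends D t,
           lt_hi (g s) (indeg ends D s)%:Z
         & gt_lo (f t) (indeg ends D t)%:Z]).
Proof.
change (decmin ends f g D <-> ~ exists s t, improving_path ends f g D s t).
split=> [[_ min_D] [s [t /(improving_path_potential hD) [D2 bD2]]]|no_path].
  by move/lexlt_dec_vec; apply: min_D.
split=> // D' bD' /lexlt_dec_vec; rewrite ltnNge.
rewrite (no_improving_path_potential_min hD _ bD') // => s t imp_st.
by apply: no_path; exists s, t.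
Qed.
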